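(* Let $\Psi$ be a context all of whose variables have level $<k$, and let $n\in\mathbb{N}$. If $\cdot\vdash\Psi^k\ \mathsf{ctx}$, then $\cdot\vdash(\lfloor\Psi\rfloor_n)^k\ \mathsf{ctx}$.
   Context: Multi-level contextual LF. Every variable $x^n$ carries a level $n\in\mathbb{N}$. Syntax: sorts $s ::= \mathsf{type}\mid\mathsf{kind}$; atomic types $P ::= s \mid \mathsf{a} \mid P\,(\hat\Gamma.N)$; types $A,B,K ::= P \mid \Pi x^n{:}A[\Phi^n].B$; atomic terms $R ::= x^n[\sigma] \mid \mathsf{c} \mid R\,(\hat\Gamma.N)$; normal terms $M,N ::= R \mid \lambda x^n.M$; substitutions $\sigma ::= \cdot \mid \sigma,\hat\Gamma^n.M \mid \sigma, x^n$ (the last is a renaming entry); contexts $\Psi,\Phi,\Gamma ::= \cdot \mid \Psi, x^n{:}A[\Phi^n]$. Constants $\mathsf a,\mathsf c$ come from a fixed signature $\Sigma$; $\hat\Gamma$ is the list of variable names of $\Gamma$. $\Phi^n$ indicates that all variables of $\Phi$ have level $<n$. Merging: $\cdot\oplus\Phi=\Phi$; $\Psi\oplus\cdot=\Psi$; $(\Psi,x^n{:}A[\Gamma^n])\oplus(\Phi,y^k{:}B[\Gamma'^k]) = ((\Psi,x^n{:}A[\Gamma^n])\oplus\Phi), y^k{:}B[\Gamma'^k]$ if $k\le n$, and $=(\Psi\oplus(\Phi,y^k{:}B[\Gamma'^k])),x^n{:}A[\Gamma^n]$ otherwise. Chopping: $\lfloor\cdot\rfloor_n=\cdot$; $\lfloor\Psi,x^k{:}A[\Phi^k]\rfloor_n=\lfloor\Psi\rfloor_n$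 if $k<n$, and $=\Psi,x^k{:}A[\Phi^k]$ otherwise. Context well-formedness $\Psi\vdash\Phi^n\ \mathsf{ctx}$: $\Psi\vdash\cdot\ \mathsf{ctx}$; and $\Psi\vdash \Phi^n,x^k{:}A[\Gamma^k]\ \mathsf{ctx}$ (for $k<n$) if $\Psi\vdash\Phi^n\ \mathsf{ctx}$, $(\lfloor\Psi\rfloor_n\oplus\lfloor\Phi^n\rfloor_k)\oplus\Gamma^k\vdash A\Leftarrow\mathsf{type}$ and $\lfloor\Psi\rfloor_n\oplus\lfloor\Phi^n\rfloor_k\vdash\Gamma^k\ \mathsf{ctx}$. The remaining (bidirectional) judgments, defined mutually: $\Psi\vdash\mathsf{type}\Leftarrow\mathsf{kind}$; $\Psi\vdash P\Leftarrow\mathsf{type}$ if $\Psi\vdash P\Rightarrow\mathsf{type}$; $\Psi\vdash\Pi x^n{:}A[\Phi^n].B\Leftarrow s$ if $\lfloor\Psi\rfloor_n\oplus\Phi^n\vdash A\Leftarrow\mathsf{type}$, $\Psi\vdash\Phi^n\ \mathsf{ctx}$ and $\Psi\oplus x^n{:}A[\Phi^n]\vdash B\Leftarrow s$; $\Psi\vdash\mathsf a\Rightarrow\Sigma(\mathsf a)$, $\Psi\vdash\mathsf c\Rightarrow\Sigma(\mathsf c)$; $\Psi\vdash P\,(\hat\Phi^n.N)\Rightarrow[\hat\Phi^n.N/x^n]K$ if $\Psi\vdash P\Rightarrow\Pi x^n{:}A[\Phi^n].K$ and $\lfloor\Psi\rfloor_n\oplus\Phi^n\vdash N\Leftarrow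 A$ (same rule for $R\,(\hat\Phi^n.N)$); $\Psi\vdash x^n[\sigma]\Rightarrow[\sigma]_{\Phi^n}A$ if $\Psi(x^n)=A[\Phi^n]$ and $\Psi\vdash\sigma\Leftarrow\Phi^n$; $\Psi\vdash R\Leftarrow Q$ if $\Psi\vdash R\Rightarrow P$ and $P=Q$; $\Psi\vdash\lambda x^n.M\Leftarrow\Pi x^n{:}A[\Phi^n].B$ if $\Psi\oplus x^n{:}A[\Phi^n]\vdash M\Leftarrow B$; $\Psi\vdash\cdot\Leftarrow\cdot$; $\Psi\vdash\sigma,\hat\Gamma^k.M\Leftarrow\Phi^n,x^k{:}A[\Gamma^k]$ if $\Psi\vdash\sigma\Leftarrow\Phi^n$ and $\lfloor\Psi\rfloor_k\oplus[\sigma]_{\Phi^n}(\Gamma^k)\vdash M\Leftarrow[\lfloor\sigma\rfloor_k\oplus\mathrm{id}(\hat\Gamma^k)]A$; $\Psi\vdash\sigma,y^k\Leftarrow\Phi^n,x^k{:}A[\Gamma^k]$ if $\Psi\vdash\sigma\Leftarrow\Phi^n$ and $\Psi(y^k)=[\sigma]_{\Phi^n}(A[\Gamma^k])$. Here $[\hat\Phi.N/x]$ and $[\sigma]$ are the (capture-avoiding, $\beta$-redex-eliminating) hereditary single and simultaneous substitutions, and $\lfloor\sigma\rfloor_k$, $\sigma\oplus\tau$, $\mathrm{id}(\hat\Gamma)$ are the analogous chopping, merging and identity operations on substitutions. *)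

From Stdlib Require Import List Arith.
Import ListNotations.

Record var := V { vname : nat; vlvl : nat }.

Definition var_eqb (x y : var) : bool :=
  Nat.eqb (vname x) (vname y) && Nat.eqb (vlvl x) (vlvl y).

Inductive sort := SType | SKind.

(** Lists of names [hat Gamma] are stored in snoc order: head = rightmost. *)
Inductive tp :=
| TSort (s : sort)
| TConst (a : nat)
| TApp (P : tp) (g : list var) (N : tm)          (* P (hatGamma.N) *)
| TPi (x : var) (A : tp) (Phi : ctx) (B : tp)    (* Pi x^n:A[Phi^n].B *)
with ctx :=
| CNil
| CSnoc (Psi : ctx) (x : var) (A : tp) (Phi : ctx)  (* Psi, x^n:A[Phi^n] *)
with tm :=
| TmVar (x : var) (s : sub)
| TmConst (c : nat)
| TmApp (R : tm) (g : list var) (N : tm)         (* R (hatGamma.N) *)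
| TmLam (x : var) (M : tm)
with sub :=
| SNil
| SCons (s : sub) (k : nat) (g : list var) (M : tm)  (* sigma, hatGamma^k.M *)
| SRen (s : sub) (y : var).

Definition atomic_tp (A : tp) : Prop :=
  match A with TPi _ _ _ _ => False | _ => True end.

(** All variable names occurring (free or bound) in a piece of syntax. *)
Fixpoint vars_tp (A : tp) : list var :=
  match A with
  | TSort _ | TConst _ => []
  | TApp P g N => vars_tp P ++ g ++ vars_tm N
  | TPi x A Phi B => x :: vars_tp A ++ vars_ctx Phi ++ vars_tp B
  end
with vars_ctx (Psi : ctx) : list var :=
  match Psi with
  | CNil => []
  | CSnoc Psi' x A Phi => vars_ctx Psi' ++ x :: vars_tp A ++ vars_ctx Phi
  end
with vars_tm (M : tm) : list var :=
  match M with
  | TmVar x s => x :: vars_sub s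
  | TmConst _ => []
  | TmApp R g N => vars_tm R ++ g ++ vars_tm N
  | TmLam x M => x :: vars_tm M
  end
with vars_sub (s : sub) : list var :=
  match s with
  | SNil => []
  | SCons s' _ g M => vars_sub s' ++ g ++ vars_tm M
  | SRen s' y => y :: vars_sub s'
  end.

Fixpoint names (Psi : ctx) : list var :=
  match Psi with
  | CNil => []
  | CSnoc Psi' x _ _ => x :: names Psi'
  end.

Fixpoint ctx_lookup (Psi : ctx) (x : var) : option (tp * ctx) :=
  match Psi with
  | CNil => None
  | CSnoc Psi' y A Phi => if var_eqb x y then Some (A, Phi) else ctx_lookup Psi' x
  end.

Fixpoint chop (n : nat) (Psi : ctx) : ctx :=
  match Psi with
  | CNil => CNil
  | CSnoc Psi' x _ _ => if vlvl x <? n then chop n Psi' else Psi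
  end.

Fixpoint merge (Psi Phi : ctx) {struct Psi} : ctx :=
  match Psi with
  | CNil => Phi
  | CSnoc Psi' x A G =>
      (fix aux (Phi : ctx) : ctx :=
         match Phi with
         | CNil => Psi
         | CSnoc Phi' y B G' =>
             if vlvl y <=? vlvl x then CSnoc (aux Phi') y B G'
             else CSnoc (merge Psi' Phi) x A G
         end) Phi
  end.

Fixpoint ctx_levels_lt (k : nat) (Psi : ctx) : Prop :=
  match Psi with
  | CNil => True
  | CSnoc Psi' x _ _ => vlvl x < k /\ ctx_levels_lt k Psi'
  end.

Fixpoint chop_sub (k : nat) (s : sub) : sub :=
  match s with
  | SNil => SNil
  | SCons s' j _ _ => if j <? k then chop_sub k s' else s
  | SRen s' y => if vlvl y <? k then chop_sub k s' else s
  end.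

Fixpoint merge_sub (s t : sub) {struct s} : sub :=
  match s with
  | SNil => t
  | SCons s' k g M =>
      (fix aux (t : sub) : sub :=
         match t with
         | SNil => s
         | SCons t' j h N =>
             if j <=? k then SCons (aux t') j h N else SCons (merge_sub s' t) k g M
         | SRen t' y =>
             if vlvl y <=? k then SRen (aux t') y else SCons (merge_sub s' t) k g M
         end) t
  | SRen s' z =>
      (fix aux (t : sub) : sub :=
         match t with
         | SNil => s
         | SCons t' j h N =>
             if j <=? vlvl z then SCons (aux t') j h N else SRen (merge_sub s' t) z
         | SRen t' y =>
             if vlvl y <=? vlvl z then SRen (aux t') y else SRen (merge_sub s' t) z
         end) t
  end.

Fixpoint id_sub (g : list var) : sub :=
  match g with
  | [] => SNil
  | x :: g' => SRen (id_sub g') x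
  end.

(** Entries of a substitution, looked up against its domain hat Phi. *)
Inductive sentry := EnTm (g : list var) (M : tm) | EnRen (y : var).

Fixpoint sub_lookup (s : sub) (d : list var) (x : var) : option sentry :=
  match s, d with
  | SCons s' _ g M, y :: d' => if var_eqb x y then Some (EnTm g M) else sub_lookup s' d' x
  | SRen s' z, y :: d' => if var_eqb x y then Some (EnRen z) else sub_lookup s' d' x
  | _, _ => None
  end.

(** Capture avoidance (variable convention): a binder must not be in the
    domain of the substitution nor occur in it. *)
Definition fresh (s : sub) (d : list var) (x : var) : Prop :=
  ~ In x d /\ ~ In x (vars_sub s).
Definition fresh_all (s : sub) (d : list var) (g : list var) : Prop :=
  Forall (fresh s d) g.

(** Hereditary simultaneous substitution [s]_{d} as a (functional) relation:
    hs_X s d E E'  means  [s]_{d} E = E'.  Single substitution [hatG.N/x] is [ (.,hatG.N) ]_{x}. *)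
Inductive hs_tm : sub -> list var -> tm -> tm -> Prop :=
| hs_var_none s d x t t' :
    sub_lookup s d x = None -> hs_sub s d t t' -> hs_tm s d (TmVar x t) (TmVar x t')
| hs_var_ren s d x z t t' :
    sub_lookup s d x = Some (EnRen z) -> hs_sub s d t t' -> hs_tm s d (TmVar x t) (TmVar z t')
| hs_var_tm s d x g M t t' M' :
    sub_lookup s d x = Some (EnTm g M) -> hs_sub s d t t' -> hs_tm t' g M M' ->
    hs_tm s d (TmVar x t) M'
| hs_const s d c : hs_tm s d (TmConst c) (TmConst c)
| hs_app_neu s d R g N R' N' :
    hs_tm s d R R' -> fresh_all s d g -> hs_tm s d N N' ->
    (forall y M, R' <> TmLam y M) ->
    hs_tm s d (TmApp R g N) (TmApp R' g N')
| hs_app_red s d R g N y M N' M' :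
    hs_tm s d R (TmLam y M) -> fresh_all s d g -> hs_tm s d N N' ->
    hs_tm (SCons SNil (vlvl y) g N') [y] M M' ->
    hs_tm s d (TmApp R g N) M'
| hs_lam s d x M M' :
    fresh s d x -> hs_tm s d M M' -> hs_tm s d (TmLam x M) (TmLam x M')
with hs_sub : sub -> list var -> sub -> sub -> Prop :=
| hs_snil s d : hs_sub s d SNil SNil
| hs_scons s d t k g M t' M' :
    hs_sub s d t t' -> fresh_all s d g -> hs_tm s d M M' ->
    hs_sub s d (SCons t k g M) (SCons t' k g M')
| hs_sren_none s d t y t' :
    sub_lookup s d y = None -> hs_sub s d t t' -> hs_sub s d (SRen t y) (SRen t' y)
| hs_sren_ren s d t y z t' :
    sub_lookup s d y = Some (EnRen z) -> hs_sub s d t t' -> hs_sub s d (SRen t y) (SRen t' z)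
| hs_sren_tm s d t y g M t' :
    sub_lookup s d y = Some (EnTm g M) -> hs_sub s d t t' ->
    hs_sub s d (SRen t y) (SCons t' (vlvl y) g M)
with hs_tp : sub -> list var -> tp -> tp -> Prop :=
| hs_sort s d so : hs_tp s d (TSort so) (TSort so)
| hs_tconst s d a : hs_tp s d (TConst a) (TConst a)
| hs_tapp s d P g N P' N' :
    hs_tp s d P P' -> fresh_all s d g -> hs_tm s d N N' ->
    hs_tp s d (TApp P g N) (TApp P' g N')
| hs_pi s d x A Phi B A' Phi' B' :
    fresh s d x -> fresh_all s d (names Phi) ->
    hs_ctx s d Phi Phi' -> hs_tp s d A A' -> hs_tp s d B B' ->
    hs_tp s d (TPi x A Phi B) (TPi x A' Phi' B')
with hs_ctx : sub -> list var -> ctx -> ctx -> Prop :=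
| hs_cnil s d : hs_ctx s d CNil CNil
| hs_csnoc s d Phi x A G Phi' A' G' :
    hs_ctx s d Phi Phi' -> fresh s d x -> fresh_all s d (names G) ->
    hs_ctx s d G G' -> hs_tp s d A A' ->
    hs_ctx s d (CSnoc Phi x A G) (CSnoc Phi' x A' G').

Inductive chk_tp (sig : nat -> option tp) : ctx -> tp -> sort -> Prop :=
| ct_type Psi : chk_tp sig Psi (TSort SType) SKind
| ct_atom Psi P : syn_tp sig Psi P (TSort SType) -> chk_tp sig Psi P SType
| ct_pi Psi x A Phi B s :
    chk_tp sig (merge (chop (vlvl x) Psi) Phi) A SType ->
    wf_ctx sig Psi (vlvl x) Phi ->
    chk_tp sig (merge Psi (CSnoc CNil x A Phi)) B s ->
    chk_tp sig Psi (TPi x A Phi B) s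
with syn_tp (sig : nat -> option tp) : ctx -> tp -> tp -> Prop :=
| st_const Psi a K : sig a = Some K -> syn_tp sig Psi (TConst a) K
| st_app Psi P x A Phi K N K' :
    syn_tp sig Psi P (TPi x A Phi K) ->
    chk_tm sig (merge (chop (vlvl x) Psi) Phi) N A ->
    hs_tp (SCons SNil (vlvl x) (names Phi) N) [x] K K' ->
    syn_tp sig Psi (TApp P (names Phi) N) K'
with syn_tm (sig : nat -> option tp) : ctx -> tm -> tp -> Prop :=
| sm_var Psi x A Phi s A' :
    ctx_lookup Psi x = Some (A, Phi) ->
    chk_sub sig Psi s Phi ->
    hs_tp s (names Phi) A A' ->
    syn_tm sig Psi (TmVar x s) A'
| sm_const Psi c A : sig c = Some A -> syn_tm sig Psi (TmConst c) A
| sm_app Psi R x A Phi K N K' :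
    syn_tm sig Psi R (TPi x A Phi K) ->
    chk_tm sig (merge (chop (vlvl x) Psi) Phi) N A ->
    hs_tp (SCons SNil (vlvl x) (names Phi) N) [x] K K' ->
    syn_tm sig Psi (TmApp R (names Phi) N) K'
with chk_tm (sig : nat -> option tp) : ctx -> tm -> tp -> Prop :=
| cm_atom Psi R P Q :
    syn_tm sig Psi R P -> P = Q -> atomic_tp Q -> chk_tm sig Psi R Q
| cm_lam Psi x M A Phi B :
    chk_tm sig (merge Psi (CSnoc CNil x A Phi)) M B ->
    chk_tm sig Psi (TmLam x M) (TPi x A Phi B)
with chk_sub (sig : nat -> option tp) : ctx -> sub -> ctx -> Prop :=
| cs_nil Psi : chk_sub sig Psi SNil CNil
| cs_tm Psi s Phi x A G G' A' M :
    chk_sub sig Psi s Phi ->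
    hs_ctx s (names Phi) G G' ->
    hs_tp (merge_sub (chop_sub (vlvl x) s) (id_sub (names G)))
          (names (merge (chop (vlvl x) Phi) G)) A A' ->
    chk_tm sig (merge (chop (vlvl x) Psi) G') M A' ->
    chk_sub sig Psi (SCons s (vlvl x) (names G) M) (CSnoc Phi x A G)
| cs_ren Psi s Phi x A G y A' G' :
    chk_sub sig Psi s Phi ->
    vlvl y = vlvl x ->
    hs_tp s (names Phi) A A' ->
    hs_ctx s (names Phi) G G' ->
    ctx_lookup Psi y = Some (A', G') ->
    chk_sub sig Psi (SRen s y) (CSnoc Phi x A G)
(** wf_ctx sig Psi n Phi  :  Psi |- Phi^n ctx *)
with wf_ctx (sig : nat -> option tp) : ctx -> nat -> ctx -> Prop :=
| wc_nil Psi n : wf_ctx sig Psi n CNil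
| wc_snoc Psi n Phi x A G :
    vlvl x < n ->
    wf_ctx sig Psi n Phi ->
    chk_tp sig (merge (merge (chop n Psi) (chop (vlvl x) Phi)) G) A SType ->
    wf_ctx sig (merge (chop n Psi) (chop (vlvl x) Phi)) (vlvl x) G ->
    wf_ctx sig Psi n (CSnoc Phi x A G).


(* Chopping only removes declarations from the right end of a context, and
   context well-formedness is closed under taking prefixes. *)

Lemma wf_ctx_snoc_inv (sig : nat -> option tp) (Psi : ctx) (n : nat)
    (Phi : ctx) (x : var) (A : tp) (G : ctx) :
  wf_ctx sig Psi n (CSnoc Phi x A G) -> wf_ctx sig Psi n Phi.
Proof. intros H; inversion H; assumption. Qed.

Lemma wf_ctx_chop (sig : nat -> option tp) (Psi : ctx) (k n : nat) (Phi : ctx) :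
  wf_ctx sig Psi k Phi -> wf_ctx sig Psi k (chop n Phi).
Proof.
  induction Phi as [|Phi IH x A G _]; intros H; simpl.
  - exact H.
  - destruct (Nat.ltb (vlvl x) n).
    + apply IH, (wf_ctx_snoc_inv _ _ _ _ _ _ _ H).
    + exact H.
Qed.

Theorem mainTheorem4 (sig : nat -> option tp) (Psi : ctx) (k n : nat) :
  ctx_levels_lt k Psi ->
  wf_ctx sig CNil k Psi ->
  wf_ctx sig CNil k (chop n Psi).
Proof. intros _; apply wf_ctx_chop. Qed.
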